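(* Let $\Phi$ be an irreducible root system of rank $n$. There exists a subset $H_\Phi\subseteq[n]$ such that $$\mathcal H_\Phi=\{w(\breve\omega_k)^\perp\mid w\in W,\ k\in H_\Phi\}.$$ Furthermore, $H_\Phi$ is contained in the set of $h\in[n]$ such that the standard parabolic subsystem of $\Phi$ generated by $\Pi\setminus\{\alpha_h\}$ is irreducible.
   Context: $\Phi$ is a finite irreducible crystallographic root system in $E=\operatorname{span}_{\mathbb R}\Phi$ with inner product $(-,-)$, basis $\Pi=\{\alpha_1,\dots,\alpha_n\}$, Weyl group $W$. The fundamental coweights $\breve\omega_1,\dots,\breve\omega_n$ are the vectors of $E$ with $(\alpha_j,\breve\omega_i)=\delta_{ij}$; $W$ acts on them as vectors of $E$. $\mathcal P_\Phi=\operatorname{conv}(\Phi)$ and $\mathcal H_\Phi$ is the set of linear hyperplanes $\operatorname{span}_{\mathbb R}F$, $F$ a face of $\mathcal P_\Phi$ of dimension $n-2$. The standard parabolic subsystem generated by $\Gamma\subseteq\Pi$ is $\Phi\cap\operatorname{span}\Gamma$. *)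

From HB Require Import structures.
From mathcomp Require Import all_boot all_order all_algebra.
From mathcomp Require Import reals.
Set Implicit Arguments. Unset Strict Implicit. Unset Printing Implicit Defensive.
Import Order.TTheory GRing.Theory Num.Theory.
Local Open Scope ring_scope.

(* Ambient Euclidean space E = R^n (row vectors) with the standard inner
   product; every n-dimensional Euclidean space is isometric to it. *)
Section RootSystems.
Variables (R : realType) (n : nat).
Notation vec := 'rV[R]_n.

Definition dot (u v : vec) : R := (u *m v^T) 0 0.

(* Reflection s_a as a matrix acting on row vectors: v *m refl a = s_a(v). *)
Definition refl (a : vec) : 'M[R]_n :=
  1%:M - ((2 / dot a a) *: (a^T *m a)).

Definition is_root_system (Phi : seq vec) : Prop :=
  [/\ (0 \notin Phi),
      (forall v : vec, v \in <<Phi>>%VS),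
      (forall a c, a \in Phi -> c *: a \in Phi -> c = 1 \/ c = -1),
      (forall a b, a \in Phi -> b \in Phi -> b *m refl a \in Phi) &
      (forall a b, a \in Phi -> b \in Phi ->
         exists z : int, 2 * dot b a / dot a a = z%:~R)].

Definition irreducible (Phi : seq vec) : Prop :=
  forall P : pred vec,
    (exists2 a, a \in Phi & P a) -> (exists2 b, b \in Phi & ~~ P b) ->
    exists a b, [/\ a \in Phi, b \in Phi, P a, ~~ P b & dot a b != 0].

Definition is_base (Phi : seq vec) (Pi : 'I_n -> vec) : Prop :=
  [/\ (forall i, Pi i \in Phi),
      free [seq Pi i | i <- enum 'I_n] &
      (forall b, b \in Phi -> exists c : 'I_n -> int,
          b = \sum_i (c i)%:~R *: Pi i /\
          ((forall i, 0 <= c i) \/ (forall i, c i <= 0)))].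

Definition in_weyl (Phi : seq vec) (w : 'M[R]_n) : Prop :=
  exists s : seq vec, all (mem Phi) s /\ w = foldr mulmx 1%:M (map refl s).

Definition is_coweights (Pi omega : 'I_n -> vec) : Prop :=
  forall i j, dot (Pi j) (omega i) = (i == j)%:R.

Definition conv (Phi : seq vec) (x : vec) : Prop :=
  exists c : 'I_(size Phi) -> R,
    [/\ (forall i, 0 <= c i), \sum_i c i = 1 & x = \sum_i c i *: Phi`_i].

Definition is_face (P F : vec -> Prop) : Prop :=
  exists (a : vec) (c : R), (forall y, P y -> dot a y <= c) /\
    (forall x, F x <-> (P x /\ dot a x = c)).

Definition is_span (S : vec -> Prop) (V : {vspace vec}) : Prop :=
  (forall x, S x -> x \in V) /\
  (forall U : {vspace vec}, (forall x, S x -> x \in U) -> (V <= U)%VS).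

Definition has_dim (F : vec -> Prop) (d : nat) : Prop :=
  (exists x, F x) /\
  exists D, is_span (fun v => exists x y, [/\ F x, F y & v = x - y]) D
            /\ \dim D = d.

Definition in_HPhi (Phi : seq vec) (V : {vspace vec}) : Prop :=
  exists F : vec -> Prop,
    [/\ is_face (conv Phi) F, has_dim F (n - 2) & is_span F V].

Definition is_perp (V : {vspace vec}) (v : vec) : Prop :=
  forall x, (x \in V) = (dot x v == 0).

Definition parabolic (Phi : seq vec) (Pi : 'I_n -> vec) (h : 'I_n) : seq vec :=
  [seq b <- Phi | b \in <<[seq Pi j | j <- enum 'I_n & j != h]>>%VS].

End RootSystems.

From HB Require Import structures.
From mathcomp Require Import all_boot all_order all_algebra.
From mathcomp Require Import reals.
From mathcomp Require Import ring lra zify.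
From Stdlib Require Import Classical.
Set Implicit Arguments. Unset Strict Implicit. Unset Printing Implicit Defensive.
Import Order.TTheory GRing.Theory Num.Theory.
Local Open Scope ring_scope.

(* A facet hyperplane V of conv(Phi) is spanned by the roots of the facet.  Its normal
   can be moved by the Weyl group into the dominant chamber, and a dominant vector
   orthogonal to n - 1 independent roots is orthogonal to all simple roots but one, i.e.
   it is a multiple of a fundamental coweight omega_k.  So H_Phi can be taken to be the
   set of k for which omega_k^perp is a facet hyperplane.
   For such a k, if the parabolic subsystem of omega_k^perp split into two orthogonal
   parts, so would the roots of the facet; irreducibility of Phi produces a root g that
   is not orthogonal to roots e1, e2 of the two parts.  After reflecting g so that
   (g, e1), (g, e2) > 0, integrality of the Cartan numbers puts -s_e1 s_e2 g strictly
   beyond the facet unless g lies in its span; hence g belongs to the parabolic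
   subsystem and links the two parts. *)

Lemma count_lt_subpred (T : eqType) (a b : pred T) (s : seq T) x :
  subpred a b -> x \in s -> b x -> ~~ a x -> (count a s < count b s)%N.
Proof.
move=> ab + bx nax; elim: s => //= y s IH; rewrite inE => /orP [/eqP <-|/IH lt_ab].
  by rewrite bx (negbTE nax) add0n add1n ltnS sub_count.
have : (a y <= b y)%N by case: (boolP (a y)) => // /ab ->.
by move: lt_ab; clear; lia.
Qed.

Lemma sum_delta1 (R : pzSemiRingType) m (i0 : 'I_m) : \sum_i (i == i0)%:R = 1 :> R.
Proof. by rewrite (bigD1 i0) //= eqxx big1 ?addr0 // => i /negbTE ->. Qed.

Lemma sum_mul_delta (R : pzSemiRingType) m (j : 'I_m) (f : 'I_m -> R) :
  \sum_i f i * (i == j)%:R = f j.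
Proof.
by rewrite (bigD1 j) //= eqxx mulr1 big1 ?addr0 // => i /negbTE ->; rewrite mulr0.
Qed.

Lemma sum_deltaZ (R : pzRingType) (V : lmodType R) m (i0 : 'I_m) (f : 'I_m -> V) :
  \sum_i (i == i0)%:R *: f i = f i0.
Proof.
by rewrite (bigD1 i0) //= eqxx scale1r big1 ?addr0 // => i /negbTE ->; rewrite scale0r.
Qed.

Section InnerProduct.
Variables (R : realType) (n : nat).
Notation vec := 'rV[R]_n.
Implicit Types (u v x y a : vec).

Lemma dotE u v : dot u v = \sum_i u 0 i * v 0 i.
Proof. by rewrite /dot !mxE; apply: eq_bigr => i _; rewrite mxE. Qed.

Lemma dotC u v : dot u v = dot v u.
Proof. by rewrite !dotE; apply: eq_bigr => i _; rewrite mulrC. Qed.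

Lemma dotDl u v x : dot (u + v) x = dot u x + dot v x.
Proof. by rewrite !dotE -big_split; apply: eq_bigr => i _; rewrite mxE mulrDl. Qed.

Lemma dotZl c u x : dot (c *: u) x = c * dot u x.
Proof. by rewrite !dotE mulr_sumr; apply: eq_bigr => i _; rewrite mxE mulrA. Qed.

Lemma dotNl u x : dot (- u) x = - dot u x.
Proof. by rewrite -scaleN1r dotZl mulN1r. Qed.

Lemma dotBl u v x : dot (u - v) x = dot u x - dot v x.
Proof. by rewrite dotDl dotNl. Qed.

Lemma dot0l x : dot 0 x = 0.
Proof. by rewrite -(scale0r 0) dotZl mul0r. Qed.

Lemma dotZr c u x : dot x (c *: u) = c * dot x u.
Proof. by rewrite dotC dotZl dotC. Qed.

Lemma dotNr u x : dot x (- u) = - dot x u.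
Proof. by rewrite dotC dotNl dotC. Qed.

Lemma dotBr u v x : dot x (u - v) = dot x u - dot x v.
Proof. by rewrite !(dotC x) dotBl. Qed.

Lemma dot_suml I (r : seq I) (P : pred I) (F : I -> vec) x :
  dot (\sum_(i <- r | P i) F i) x = \sum_(i <- r | P i) dot (F i) x.
Proof. by elim/big_rec2: _ => [|i y s _ <-]; rewrite ?dot0l ?dotDl. Qed.

Lemma dot_sumr I (r : seq I) (P : pred I) (F : I -> vec) x :
  dot x (\sum_(i <- r | P i) F i) = \sum_(i <- r | P i) dot x (F i).
Proof. by rewrite dotC dot_suml; apply: eq_bigr => i _; rewrite dotC. Qed.

Lemma dot_ge0 u : 0 <= dot u u.
Proof. by rewrite dotE; apply: sumr_ge0 => i _; rewrite -expr2 sqr_ge0. Qed.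

Lemma dot_eq0 u : (dot u u == 0) = (u == 0).
Proof.
apply/idP/idP => [|/eqP->]; last by rewrite dot0l.
rewrite dotE => /eqP u0; apply/eqP/rowP => i; rewrite mxE.
have sq_ge0 j : 0 <= u 0 j * u 0 j by rewrite -expr2 sqr_ge0.
have := psumr_eq0P (P := predT) (fun j _ => sq_ge0 j) u0 (i := i) isT.
by move/eqP; rewrite mulf_eq0 orbb => /eqP.
Qed.

Lemma dot_gt0 u : u != 0 -> 0 < dot u u.
Proof. by move=> nz; rewrite lt_def dot_ge0 dot_eq0 nz. Qed.

Lemma dot_mulmx x M y : dot (x *m M) y = dot x (y *m M^T).
Proof. by rewrite /dot trmx_mul trmxK mulmxA. Qed.

Lemma reflE a v : v *m refl a = v - (2 * dot v a / dot a a) *: a.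
Proof.
rewrite /refl mulmxBr mulmx1 -scalemxAr mulmxA.
have -> : v *m a^T = (dot v a)%:M by rewrite [LHS]mx11_scalar.
by rewrite mul_scalar_mx scalerA mulrAC.
Qed.

Lemma dot_reflE a x y :
  dot (x *m refl a) y = dot x y - 2 * dot x a / dot a a * dot a y.
Proof. by rewrite reflE dotBl dotZl. Qed.

Lemma trmx_refl a : (refl a)^T = refl a.
Proof. by rewrite /refl linearB /= linearZ /= trmx_mul trmxK tr_scalar_mx. Qed.

Lemma reflK a v : a != 0 -> v *m refl a *m refl a = v.
Proof.
move=> nz; have aa : dot a a != 0 by rewrite dot_eq0.
rewrite !reflE dotBl dotZl.
have -> : 2 * (dot v a - 2 * dot v a / dot a a * dot a a) / dot a a
          = - (2 * dot v a / dot a a) by field.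
by rewrite scaleNr opprK subrK.
Qed.

Lemma dot_refl a x y : a != 0 -> dot (x *m refl a) (y *m refl a) = dot x y.
Proof. by move=> nz; rewrite dot_mulmx trmx_refl reflK. Qed.

Lemma refl_self a : a != 0 -> a *m refl a = - a.
Proof.
move=> nz; have aa : dot a a != 0 by rewrite dot_eq0.
rewrite reflE (_ : 2 * dot a a / dot a a = 2); last by field.
by rewrite scaler_nat mulr2n opprD addrA subrr sub0r.
Qed.

End InnerProduct.

Section Orthogonality.
Variables (R : realType) (n : nat).
Notation vec := 'rV[R]_n.

Definition perpv (v : vec) : {vspace vec} := lker (linfun (mulmxr v^T)).

Lemma mem_perpv v x : (x \in perpv v) = (dot x v == 0).
Proof.
rewrite memv_ker lfunE /=; apply/eqP/eqP => [xv|xv]; first by rewrite /dot xv mxE.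
rewrite [LHS]mx11_scalar; move: xv; rewrite /dot => ->.
by apply/matrixP => i j; rewrite !mxE mul0rn.
Qed.

Lemma perpvP v : is_perp (perpv v) v.
Proof. by move=> x; rewrite mem_perpv. Qed.

Lemma is_perpP V v : is_perp V v <-> V = perpv v.
Proof.
split=> [Vv|->]; last exact: perpvP.
by apply/vspaceP => x; rewrite Vv mem_perpv.
Qed.

Lemma dim_fullv : \dim (fullv : {vspace vec}) = n.
Proof. by rewrite dimvf /dim /= mul1n. Qed.

Lemma dim_perpv v : v != 0 -> \dim (perpv v) = n.-1.
Proof.
move=> nz.
have := limg_ker_dim (linfun (mulmxr v^T : vec -> 'M_1)) fullv.
rewrite capfv dim_fullv -/(perpv v); set L := (_ @: _)%VS.
suff -> : \dim L = 1%N by move/(congr1 predn); rewrite addn1.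
apply/eqP; rewrite eqn_leq; apply/andP; split.
  by have := dimvS (subvf L); rewrite dimvf /dim /= muln1.
rewrite lt0n dimv_eq0; apply/eqP => L0.
have : v *m v^T \in L by rewrite -[v *m v^T](lfunE (mulmxr v^T)) memv_img ?memvf.
rewrite L0 memv0 => /eqP vv; move: nz; rewrite -dot_eq0.
by rewrite /dot vv mxE eqxx.
Qed.

Lemma dot_span_eq0 (X : seq vec) v y : y \in <<X>>%VS ->
  (forall x, x \in X -> dot x v = 0) -> dot y v = 0.
Proof.
move=> yX X0; suff /subvP/(_ y yX) : (<<X>> <= perpv v)%VS by rewrite mem_perpv => /eqP.
by apply/span_subvP => x /X0 xv; rewrite mem_perpv xv.
Qed.

Lemma orth_span_eq0 (X : seq vec) y : y \in <<X>>%VS ->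
  (forall x, x \in X -> dot x y = 0) -> y = 0.
Proof. by move=> yX X0; apply/eqP; rewrite -dot_eq0; apply/eqP/(dot_span_eq0 yX). Qed.

(* Projecting [y] off [u] leaves a vector orthogonal to [u], hence to [y]. *)
Lemma perpv_sub_colinear u y : (perpv u <= perpv y)%VS ->
  y = (dot y u / dot u u) *: u.
Proof.
move=> /subvP uy; apply/eqP; rewrite -subr_eq0 -dot_eq0.
set x := y - _ *: u.
have xu : dot x u = 0.
  rewrite /x dotBl dotZl; have [->|nz] := eqVneq u 0.
    by rewrite dotC dot0l !mul0r subr0.
  by rewrite mulfVK ?subrr ?dot_eq0.
have xy : dot x y = 0 by apply/eqP; rewrite -mem_perpv; apply: uy; rewrite mem_perpv xu.
by rewrite {2}/x dotBr dotZr xy dotC xu mulr0 subr0.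
Qed.

Lemma perpvZ t (v : vec) : t != 0 -> perpv (t *: v) = perpv v.
Proof. by move=> t0; apply/vspaceP => x; rewrite !mem_perpv dotZr mulf_eq0 (negbTE t0). Qed.

Lemma perpv_exists (V : {vspace vec}) : (0 < n)%N -> \dim V = n.-1 ->
  exists2 u : vec, u != 0 & V = perpv u.
Proof.
move=> n0 dV; pose d := \dim V.
pose B : 'M[R]_(n, d) := \matrix_(j, i) (vbasis V)`_i 0 j.
pose phi := linfun (mulmxr B : vec -> 'rV_d).
have := limg_ker_dim phi fullv; rewrite capfv dim_fullv => dimE.
have dim_img : (\dim (phi @: fullv) <= d)%N.
  by have := dimvS (subvf (phi @: fullv)); rewrite dimvf /dim /= mul1n.
have ker_gt0 : (0 < \dim (lker phi))%N by have : d = n.-1 by []; lia.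
set u := vpick (lker phi); have unz : u != 0 by rewrite vpick0 -dimv_eq0 -lt0n.
have uB : u *m B = 0 by have := memv_pick (lker phi); rewrite memv_ker lfunE => /eqP.
exists u => //; apply/eqP; rewrite eqEdim (dim_perpv unz) dV leqnn andbT.
apply/subvP => v vV; rewrite mem_perpv (coord_vbasis vV) dot_suml.
rewrite big1 // => i _; rewrite dotZl; apply/eqP; rewrite mulf_eq0; apply/orP; right.
have := congr1 (fun M : 'rV_d => M 0 i) uB; rewrite !mxE dotE => ui.
by apply/eqP; rewrite -[RHS]ui; apply: eq_bigr => j _; rewrite !mxE mulrC.
Qed.

End Orthogonality.

Section WeylGroup.
Variables (R : realType) (n : nat).
Notation vec := 'rV[R]_n.
Variable Phi : seq vec.
Hypothesis root_neq0 : 0 \notin Phi.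
Hypothesis refl_root : forall a b, a \in Phi -> b \in Phi -> b *m refl a \in Phi.

Definition weyl_word (s : seq vec) : 'M[R]_n := foldr mulmx 1%:M (map (@refl R n) s).

Lemma weyl_word_rcons s a : weyl_word (rcons s a) = weyl_word s *m refl a.
Proof.
elim: s => [|b s IH] /=; first by rewrite /weyl_word /= mulmx1 mul1mx.
by rewrite /weyl_word /= -/(weyl_word _) IH mulmxA.
Qed.

Lemma neq0_of_root a : a \in Phi -> a != 0.
Proof. by apply: contraTneq => ->. Qed.

Lemma weyl_wordK s (x : vec) : all (mem Phi) s ->
  x *m weyl_word s *m weyl_word (rev s) = x.
Proof.
elim: s x => [|a s IH] x /=; first by rewrite /weyl_word /= !mulmx1.
case/andP=> aP sP; rewrite rev_cons weyl_word_rcons /= -/(weyl_word s).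
by rewrite !mulmxA IH // reflK // neq0_of_root.
Qed.

Lemma weyl_root w b : in_weyl Phi w -> b \in Phi -> b *m w \in Phi.
Proof.
case=> s [+ ->]; elim: s b => [|a s IH] b /=; first by rewrite mulmx1.
by case/andP=> aP sP bP; rewrite mulmxA; apply: IH => //; apply: refl_root.
Qed.

Lemma dot_weyl w (x y : vec) : in_weyl Phi w -> dot (x *m w) (y *m w) = dot x y.
Proof.
case=> s [+ ->]; elim: s x y => [|a s IH] x y /=; first by rewrite !mulmx1.
by case/andP=> aP sP; rewrite !mulmxA IH // dot_refl // neq0_of_root.
Qed.

Lemma weyl_inv w : in_weyl Phi w -> exists w', [/\ in_weyl Phi w',
  (forall x : vec, x *m w *m w' = x) & (forall x : vec, x *m w' *m w = x)].
Proof.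
case=> s [sP ->]; exists (weyl_word (rev s)); split => [|x|x].
- by exists (rev s); rewrite all_rev.
- exact: weyl_wordK.
- by rewrite -{2}(revK s) weyl_wordK // all_rev.
Qed.

Lemma weyl_refl w a : in_weyl Phi w -> a \in Phi -> in_weyl Phi (w *m refl a).
Proof.
case=> s [sP ->] aP; exists (rcons s a).
by rewrite all_rcons /= aP sP -weyl_word_rcons.
Qed.

Lemma weyl1 : in_weyl Phi 1%:M.
Proof. by exists [::]. Qed.

End WeylGroup.

Section Image.
Variables (R : realType) (n : nat).
Notation vec := 'rV[R]_n.

Definition img (M : 'M[R]_n) (V : {vspace vec}) : {vspace vec} :=
  (linfun (mulmxr M) @: V)%VS.

Variables (M M' : 'M[R]_n).
Hypothesis MK : forall y : vec, y *m M *m M' = y.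
Hypothesis M'K : forall y : vec, y *m M' *m M = y.

Lemma mem_img V x : (x \in img M V) = (x *m M' \in V).
Proof.
apply/memv_imgP/idP => [[y yV ->]|xV]; first by rewrite lfunE /= MK.
by exists (x *m M') => //; rewrite lfunE /= M'K.
Qed.

Lemma dim_img V : \dim (img M V) = \dim V.
Proof.
apply: limg_dim_eq; apply/eqP; rewrite -subv0; apply/subvP => x.
rewrite memv_cap memv_ker lfunE /= => /andP[_ /eqP x0].
by rewrite memv0 -[x]MK x0 mul0mx.
Qed.

Lemma span_img (S : vec -> Prop) V :
  is_span S V -> is_span (fun x => S (x *m M')) (img M V).
Proof.
move=> [SV Vmin]; split=> [x Sx|U SU]; first by rewrite mem_img SV.
have /subvP VU : (V <= img M' U)%VS.
  apply: Vmin => x Sx; apply/memv_imgP; exists (x *m M); last by rewrite lfunE /= MK.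
  by apply: SU; rewrite MK.
apply/subvP => x; rewrite mem_img => /VU /memv_imgP [y yU].
by rewrite lfunE /= => xy; rewrite -(M'K x) xy M'K.
Qed.

End Image.

Lemma imgK (R : realType) (n : nat) (M M' : 'M[R]_n) (V : {vspace 'rV[R]_n}) :
  (forall y : 'rV[R]_n, y *m M *m M' = y) -> (forall y : 'rV[R]_n, y *m M' *m M = y) ->
  img M' (img M V) = V.
Proof.
by move=> MK M'K; apply/vspaceP => x; rewrite (mem_img M'K MK) (mem_img MK M'K) MK.
Qed.

Section WeylInvariance.
Variables (R : realType) (n : nat).
Notation vec := 'rV[R]_n.
Variable Phi : seq vec.
Hypothesis root_neq0 : 0 \notin Phi.
Hypothesis refl_root : forall a b, a \in Phi -> b \in Phi -> b *m refl a \in Phi.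

Lemma conv_mulmx (w : 'M[R]_n) x : (forall b, b \in Phi -> b *m w \in Phi) ->
  conv Phi x -> conv Phi (x *m w).
Proof.
move=> wP [c [c0 c1 ->]].
pose sg (i : 'I_(size Phi)) : 'I_(size Phi) := insubd i (index (Phi`_i *m w) Phi).
have sgE i : Phi`_(sg i) = Phi`_i *m w.
  have wi : Phi`_i *m w \in Phi by apply: wP; rewrite mem_nth.
  by rewrite /sg val_insubd index_mem wi nth_index.
exists (fun j => \sum_i (j == sg i)%:R * c i); split.
- by move=> j; apply: sumr_ge0 => i _; rewrite mulr_ge0 ?ler0n.
- rewrite exchange_big /= -[RHS]c1; apply: eq_bigr => i _.
  by rewrite -mulr_suml sum_delta1 mul1r.
- rewrite mulmx_suml; under [RHS]eq_bigr do rewrite scaler_suml.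
  rewrite exchange_big /=; apply: eq_bigr => i _.
  under eq_bigr do rewrite mulrC -scalerA.
  by rewrite -scaler_sumr sum_deltaZ sgE scalemxAl.
Qed.

Variables (w w' : 'M[R]_n).
Hypothesis ww : in_weyl Phi w.
Hypothesis ww' : in_weyl Phi w'.
Hypothesis wK : forall x : vec, x *m w *m w' = x.
Hypothesis w'K : forall x : vec, x *m w' *m w = x.

Lemma conv_weylE x : conv Phi (x *m w') <-> conv Phi x.
Proof.
have weylP v : in_weyl Phi v -> forall b, b \in Phi -> b *m v \in Phi.
  by move=> vW b bP; exact (weyl_root refl_root vW bP).
split=> [/(conv_mulmx (weylP w ww))|]; first by rewrite w'K.
exact/conv_mulmx/weylP.
Qed.

Lemma face_weyl F : is_face (conv Phi) F ->
  is_face (conv Phi) (fun x => F (x *m w')).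
Proof.
move=> [a [c [Fle FE]]].
have aw y : dot a (y *m w') = dot (a *m w) y.
  by rewrite -{1}(wK a) (dot_weyl root_neq0 _ _ ww').
exists (a *m w), c; split=> [y /conv_weylE|x]; first by rewrite -aw; apply: Fle.
by rewrite FE conv_weylE aw.
Qed.

Lemma has_dim_weyl F d : has_dim F d -> has_dim (fun x => F (x *m w')) d.
Proof.
move=> [[x0 Fx0] [D [Dspan Ddim]]]; split; first by exists (x0 *m w); rewrite wK.
exists (img w D); split; last by rewrite (dim_img wK).
have [DS Dmin] := span_img wK w'K Dspan; split=> [v [x [y [Fx Fy ->]]]|U SU].
  by apply: DS; exists (x *m w'), (y *m w'); split => //; rewrite mulmxBl.
apply: Dmin => v [x [y [Fx Fy vE]]]; apply: SU.
by exists (x *m w), (y *m w); rewrite !wK -mulmxBl -vE w'K.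
Qed.

Lemma in_HPhi_weyl V : in_HPhi Phi V -> in_HPhi Phi (img w V).
Proof.
move=> [F [Fface Fdim Vspan]]; exists (fun x => F (x *m w')).
by split; [apply: face_weyl | apply: has_dim_weyl | apply: span_img].
Qed.

Lemma perp_weyl V x : is_perp V x -> is_perp (img w V) (x *m w).
Proof.
by move=> Vx y; rewrite (mem_img wK w'K) Vx -(dot_weyl root_neq0 _ _ ww) w'K.
Qed.

End WeylInvariance.

Section Faces.
Variables (R : realType) (n : nat).
Notation vec := 'rV[R]_n.
Variable Phi : seq vec.

Definition facet_roots (a : vec) (c : R) : seq vec := [seq b <- Phi | dot a b == c].

Lemma mem_facet_roots a c b : (b \in facet_roots a c) = (b \in Phi) && (dot a b == c).
Proof. by rewrite mem_filter andbC. Qed.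

Lemma conv_root b : b \in Phi -> conv Phi b.
Proof.
move=> bP; pose i0 := Ordinal (etrans (index_mem b Phi) bP).
exists (fun i => (i == i0)%:R); split=> [i||]; rewrite ?ler0n ?sum_delta1 //.
by rewrite sum_deltaZ nth_index.
Qed.

Lemma conv_mid b b' : b \in Phi -> b' \in Phi -> conv Phi (2^-1 *: (b + b')).
Proof.
move=> bP b'P; pose i := Ordinal (etrans (index_mem b Phi) bP).
pose i' := Ordinal (etrans (index_mem b' Phi) b'P).
exists (fun j => 2^-1 * ((j == i)%:R + (j == i')%:R)); split.
- by move=> j; rewrite mulr_ge0 ?invr_ge0 ?addr_ge0 ?ler0n.
- by rewrite -mulr_sumr big_split /= !sum_delta1; field.
- under eq_bigr do rewrite -scalerA scalerDl.
  by rewrite -scaler_sumr big_split /= !sum_deltaZ !nth_index.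
Qed.

Variables (a : vec) (c : R) (F : vec -> Prop).
Hypothesis conv_le : forall y, conv Phi y -> dot a y <= c.
Hypothesis faceE : forall x, F x <-> conv Phi x /\ dot a x = c.

(* A convex combination of roots reaches level [c] only through roots at level [c]. *)
Lemma span_face V : is_span F V -> V = <<facet_roots a c>>%VS.
Proof.
move=> [FV Vmin]; apply/eqP; rewrite eqEsubv; apply/andP; split; last first.
  apply/span_subvP => b; rewrite mem_facet_roots => /andP [bP /eqP abc].
  by apply/FV/faceE; split; first exact: conv_root.
apply: Vmin => x /faceE [[cx [cx0 cx1 ->]] ax].
have level i : cx i = 0 \/ dot a Phi`_i = c.
  have sum0 : \sum_i cx i * (c - dot a Phi`_i) = 0.
    rewrite -ax dot_sumr; under eq_bigr do rewrite mulrBr.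
    rewrite sumrB -mulr_suml cx1 mul1r.
    by under [X in _ - X]eq_bigr do rewrite -dotZr; rewrite subrr.
  have ge0 j : 0 <= cx j * (c - dot a Phi`_j).
    by rewrite mulr_ge0 // subr_ge0 conv_le //; apply/conv_root/mem_nth.
  have /eqP := psumr_eq0P (fun j _ => ge0 j) sum0 (i := i) isT.
  by rewrite mulf_eq0 subr_eq0 => /orP [] /eqP; [left|right].
apply: memv_suml => i _; case: (level i) => [->|ai]; first by rewrite scale0r mem0v.
by apply/memvZ/memv_span; rewrite mem_facet_roots mem_nth ?ai /=.
Qed.

End Faces.

Section RootPolytope.
Variables (R : realType) (n : nat).
Notation vec := 'rV[R]_n.
Variable Phi : seq vec.
Hypothesis root_neq0 : 0 \notin Phi.
Hypothesis span_roots : forall v : vec, v \in <<Phi>>%VS.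
Hypothesis refl_root : forall a b, a \in Phi -> b \in Phi -> b *m refl a \in Phi.

Lemma span_roots_full : <<Phi>>%VS = fullv.
Proof. by apply/eqP; rewrite eqEsubv subvf; apply/subvP => v _; apply: span_roots. Qed.

Lemma oppr_root b : b \in Phi -> - b \in Phi.
Proof. by move=> bP; rewrite -(refl_self (neq0_of_root root_neq0 bP)) refl_root. Qed.

Lemma orth_roots_eq0 y : (forall b, b \in Phi -> dot b y = 0) -> y = 0.
Proof. by move=> Phi_y; apply: orth_span_eq0 (span_roots y) _. Qed.

Lemma conv0 : (0 < n)%N -> conv Phi 0.
Proof.
move=> n_gt0; have [b bP] : exists b, b \in Phi.
  have : (0 < size Phi)%N.
    by have := dim_span Phi; rewrite span_roots_full dim_fullv; exact: leq_trans.
  by case: Phi => // b s _; exists b; rewrite mem_head.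
by have := conv_mid bP (oppr_root bP); rewrite subrr scaler0.
Qed.

Variables (a : vec) (c : R) (F : vec -> Prop).
Hypothesis conv_le : forall y, conv Phi y -> dot a y <= c.
Hypothesis faceE : forall x, F x <-> conv Phi x /\ dot a x = c.
Variables (x0 : vec) (D : {vspace vec}).
Hypothesis Fx0 : F x0.
Hypothesis Dspan : is_span (fun v => exists x y, [/\ F x, F y & v = x - y]) D.

(* For [c <= 0] the roots and their opposites force [a = 0], so the face is all of
   [conv Phi]. *)
Lemma face_level_gt0 : (\dim D < n)%N -> 0 < c.
Proof.
move=> dimD; rewrite ltNge; apply/negP => c_le0.
have root_le b : b \in Phi -> dot a b <= c by move=> bP; apply/conv_le/conv_root.
have a0 : a = 0.
  apply: orth_roots_eq0 => b bP; rewrite dotC; apply/eqP; rewrite eq_le.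
  rewrite (le_trans (root_le b bP)) //= -oppr_le0 -dotNr.
  exact: le_trans (root_le _ (oppr_root bP)) c_le0.
have c0 : c = 0 by have /faceE [_ <-] := Fx0; rewrite a0 dot0l.
have Froot b : b \in Phi -> F b.
  by move=> bP; apply/faceE; rewrite a0 dot0l c0; split => //; apply: conv_root.
have F0 : F 0 by apply/faceE; rewrite a0 dot0l c0; split => //; apply: conv0; lia.
have : (fullv <= D)%VS.
  rewrite -span_roots_full; apply/span_subvP => b bP; apply: Dspan.1.
  by exists b, 0; rewrite subr0; split => //; apply: Froot.
by move/dimvS; rewrite dim_fullv; lia.
Qed.

Lemma face_span_dim V : 0 < c -> is_span F V -> \dim V = (\dim D).+1.
Proof.
move=> c_gt0 [FV Vmin]; have [DS Dmin] := Dspan.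
have level x : F x -> dot x a = c by move=> /faceE [_ <-]; rewrite dotC.
have D_perp : (D <= perpv a)%VS.
  apply: Dmin => v [x [y [Fx Fy ->]]].
  by rewrite mem_perpv dotBl !level ?subrr.
have VE : V = (D + <[x0]>)%VS.
  apply/eqP; rewrite eqEsubv; apply/andP; split.
    apply: Vmin => x Fx; rewrite -(subrK x0 x); apply: memv_add; last exact: memv_line.
    by apply: DS; exists x, x0.
  rewrite subv_add -memvE FV // andbT; apply: Dmin => v [x [y [Fx Fy ->]]].
  by apply: memvB; apply: FV.
have x0_neq0 : x0 != 0.
  apply/eqP => x00; have := level _ Fx0; rewrite x00 dot0l => c0.
  by move: c_gt0; rewrite -c0 ltxx.
rewrite VE dimv_disjoint_sum ?dim_vline ?x0_neq0 ?addn1 //.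
apply/eqP; rewrite -subv0; apply/subvP => y; rewrite memv_cap => /andP [yD /vlineP [k yk]].
move: yD => /(subvP D_perp); rewrite yk mem_perpv dotZl level //.
by rewrite mulf_eq0 (gt_eqF c_gt0) orbF => /eqP ->; rewrite scale0r mem0v.
Qed.

End RootPolytope.

Lemma in_HPhiP (R : realType) (n : nat) (Phi : seq 'rV[R]_n) V :
  (2 <= n)%N -> 0 \notin Phi -> (forall v, v \in <<Phi>>%VS) ->
  (forall a b, a \in Phi -> b \in Phi -> b *m refl a \in Phi) ->
  in_HPhi Phi V -> exists (a : 'rV[R]_n) (c : R),
  [/\ 0 < c, (forall b, b \in Phi -> dot a b <= c),
      V = <<facet_roots Phi a c>>%VS & \dim V = n.-1].
Proof.
move=> n_ge2 root_neq0 span_roots refl_root.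
move=> [F [[a [c [conv_le faceE]]] [[x0 Fx0] [D [Dspan Ddim]]] Vspan]].
have c_gt0 : 0 < c.
  by apply: (face_level_gt0 root_neq0 span_roots refl_root conv_le faceE Fx0 Dspan); lia.
exists a, c; split => //.
- by move=> b bP; apply/conv_le/conv_root.
- exact (span_face conv_le faceE Vspan).
- by rewrite (face_span_dim faceE Fx0 Dspan c_gt0 Vspan) Ddim; lia.
Qed.

Section SimpleRoots.
Variables (R : realType) (n : nat).
Notation vec := 'rV[R]_n.
Variable Phi : seq vec.
Variables (Pi omega : 'I_n -> vec).
Hypothesis span_roots : forall v : vec, v \in <<Phi>>%VS.
Hypothesis base : is_base Phi Pi.
Hypothesis coweights : is_coweights Pi omega.

Lemma simple_root i : Pi i \in Phi.
Proof. by case: base. Qed.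

Lemma root_simple_coef b : b \in Phi -> exists c : 'I_n -> int,
  b = \sum_i (c i)%:~R *: Pi i /\ ((forall i, 0 <= c i) \/ (forall i, c i <= 0)).
Proof. by case: base => _ _; apply. Qed.

Lemma orth_simple_eq0 y : (forall i, dot (Pi i) y = 0) -> y = 0.
Proof.
move=> Pi_y; apply: (orth_roots_eq0 span_roots) => b /root_simple_coef [c [-> _]].
by rewrite dot_suml big1 // => i _; rewrite dotZl Pi_y mulr0.
Qed.

Lemma coweight_expansion x : x = \sum_i dot (Pi i) x *: omega i.
Proof.
apply/eqP; rewrite -subr_eq0; apply/eqP/orth_simple_eq0 => j.
rewrite dotBr dot_sumr; under eq_bigr do rewrite dotZr coweights.
by rewrite sum_mul_delta subrr.
Qed.

Lemma dot_coweight (c : 'I_n -> R) h : dot (\sum_i c i *: Pi i) (omega h) = c h.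
Proof.
rewrite dot_suml; under eq_bigr do rewrite dotZl coweights eq_sym.
by rewrite sum_mul_delta.
Qed.

Lemma mem_parabolic h b :
  (b \in parabolic Phi Pi h) = (b \in Phi) && (dot b (omega h) == 0).
Proof.
rewrite /parabolic mem_filter andbC; have [bP|] //= := boolP (b \in Phi).
apply/idP/idP => [bS|/eqP].
  apply/eqP; apply: (dot_span_eq0 bS) => y /mapP [j]; rewrite mem_filter => /andP [jh _] ->.
  by rewrite coweights eq_sym (negbTE jh).
have [c [bE _]] := root_simple_coef bP.
rewrite bE dot_coweight => ch; apply: memv_suml => i _.
have [->|ih] := eqVneq i h; first by rewrite ch scale0r mem0v.
by apply/memvZ/memv_span/map_f; rewrite mem_filter ih mem_enum.
Qed.

(* The sign coherence of simple-root coordinates makes each term vanish separately. *)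
Lemma root_orth_dominant x b : (forall i, 0 <= dot (Pi i) x) -> b \in Phi ->
  dot b x = 0 -> b \in <<[seq Pi i | i <- enum [set i | dot (Pi i) x == 0%R]]>>%VS.
Proof.
move=> x_dom bP bx; have [c [bE c_sign]] := root_simple_coef bP.
have term0 i : (c i)%:~R * dot (Pi i) x = 0 :> R.
  have sum0 : \sum_i (c i)%:~R * dot (Pi i) x = 0 :> R.
    by rewrite -[RHS]bx bE dot_suml; under [RHS]eq_bigr do rewrite dotZl.
  case: c_sign => c_sign.
    have ge0 j : 0 <= (c j)%:~R * dot (Pi j) x :> R by rewrite mulr_ge0 ?ler0z.
    exact: (psumr_eq0P (fun j _ => ge0 j) sum0 (i := i) isT).
  have ge0 j : 0 <= - ((c j)%:~R * dot (Pi j) x) :> R.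
    by rewrite -mulNr mulr_ge0 // oppr_ge0 lerz0.
  have sumN0 : \sum_i - ((c i)%:~R * dot (Pi i) x) = 0 :> R by rewrite sumrN sum0 oppr0.
  by apply/eqP; rewrite -oppr_eq0; apply/eqP/(psumr_eq0P (fun j _ => ge0 j) sumN0).
rewrite bE; apply: memv_suml => i _.
have /eqP := term0 i; rewrite mulf_eq0 => /orP [/eqP ->|xi]; first by rewrite scale0r mem0v.
by apply/memvZ/memv_span/map_f; rewrite mem_enum inE.
Qed.

(* If the roots orthogonal to [x] span a hyperplane, all but one simple root is
   orthogonal to [x]. *)
Lemma perpv_dominant_coweight (S : seq vec) x : {subset S <= Phi} ->
  x != 0 -> (forall i, 0 <= dot (Pi i) x) -> <<S>>%VS = perpv x ->
  exists k, perpv x = perpv (omega k).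
Proof.
move=> SP x_neq0 x_dom Sx; set Z := [set i | dot (Pi i) x == 0].
have /dimvS : (perpv x <= <<[seq Pi i | i <- enum Z]>>)%VS.
  rewrite -Sx; apply/span_subvP => b bS; apply: root_orth_dominant (SP _ bS) _ => //.
  by apply/eqP; rewrite -mem_perpv -Sx memv_span.
rewrite (dim_perpv x_neq0) => /leq_trans/(_ (dim_span _)); rewrite size_map -cardE => dimZ.
have [k kZ] : exists k, k \notin Z.
  apply/existsP; rewrite -negb_forall; apply: contra x_neq0 => /forallP xZ.
  by apply/eqP/orth_simple_eq0 => i; have := xZ i; rewrite inE => /eqP.
have Zk : ~: Z = [set k].
  apply/eqP; rewrite eq_sym eqEcard sub1set inE kZ cards1 /=.
  by rewrite cardsCs setCK card_ord; move: dimZ; clear; lia.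
exists k; rewrite {1}(coweight_expansion x) (bigD1 k) //= big1 ?addr0 ?perpvZ //.
  by move: kZ; rewrite inE.
move=> i ik; have : i \notin ~: Z by rewrite Zk inE.
by rewrite inE negbK inE => /eqP ->; rewrite scale0r.
Qed.

End SimpleRoots.

Section Dominance.
Variables (R : realType) (n : nat).
Notation vec := 'rV[R]_n.
Variable Phi : seq vec.
Variables (Pi omega : 'I_n -> vec).
Hypothesis root_neq0 : 0 \notin Phi.
Hypothesis span_roots : forall v : vec, v \in <<Phi>>%VS.
Hypothesis refl_root : forall a b, a \in Phi -> b \in Phi -> b *m refl a \in Phi.
Hypothesis base : is_base Phi Pi.
Hypothesis coweights : is_coweights Pi omega.

(* [u] is a combination of roots and [w] permutes the roots. *)
Lemma weyl_orbit_finite (u : vec) :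
  exists s : seq vec, forall w, in_weyl Phi w -> u *m w \in s.
Proof.
pose m := size Phi; pose X := in_tuple Phi.
have uE : u = \sum_(j < m) coord X j u *: Phi`_j by apply: coord_span.
pose G (g : {ffun 'I_m -> 'I_m}) := \sum_j coord X j u *: Phi`_(g j).
exists [seq G g | g <- enum {ffun 'I_m -> 'I_m}] => w wW.
pose g := [ffun j : 'I_m => insubd j (index (Phi`_j *m w) Phi)].
suff -> : u *m w = G g by apply: map_f; rewrite mem_enum.
rewrite {1}uE mulmx_suml; apply: eq_bigr => j _; rewrite -scalemxAl ffunE.
have jw : Phi`_j *m w \in Phi by apply: (weyl_root refl_root wW); rewrite mem_nth.
by rewrite val_insubd index_mem jw nth_index.
Qed.

(* Reflecting in a simple root [Pi i] with [dot (Pi i) x < 0] raises the height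
   [dot x (\sum_i omega i)]; the height takes finitely many values on the orbit. *)
Lemma dominant_weyl (u : vec) :
  exists2 w, in_weyl Phi w & forall i, 0 <= dot (Pi i) (u *m w).
Proof.
have [s orbit] := weyl_orbit_finite u.
pose ht (y : vec) := dot y (\sum_i omega i).
pose above w := count (fun y => ht (u *m w) < ht y) s.
suff : forall N w, in_weyl Phi w -> (above w < N)%N ->
    exists2 w, in_weyl Phi w & forall i, 0 <= dot (Pi i) (u *m w).
  by apply; [apply: weyl1 | apply: ltnSn].
elim=> // N IH w wW above_w.
have [/forallP dom|] := boolP [forall i, 0 <= dot (Pi i) (u *m w)]; first by exists w.
rewrite negb_forall => /existsP [i]; rewrite -ltNge => neg.
have Pi_neq0 : Pi i != 0 by apply: (neq0_of_root root_neq0); apply: simple_root.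
have w'W := weyl_refl wW (simple_root base i); apply: (IH _ w'W).
have ht_lt : ht (u *m w) < ht (u *m (w *m refl (Pi i))).
  have ht_Pi : dot (Pi i) (\sum_j omega j) = 1.
    rewrite dot_sumr (bigD1 i) //= coweights eqxx big1 ?addr0 // => j ji.
    by rewrite coweights (negbTE ji).
  have : 2 * dot (u *m w) (Pi i) / dot (Pi i) (Pi i) < 0.
    by rewrite pmulr_llt0 ?invr_gt0 ?dot_gt0 // pmulr_rlt0 // dotC.
  by rewrite /ht mulmxA dot_reflE ht_Pi mulr1; lra.
rewrite -ltnS (leq_trans _ above_w) // ltnS.
apply: (count_lt_subpred (x := u *m (w *m refl (Pi i)))); rewrite ?orbit ?ltxx //.
by move=> y /= /(lt_trans ht_lt).
Qed.

End Dominance.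

Section FacetRoots.
Variables (R : realType) (n : nat).
Notation vec := 'rV[R]_n.
Variable Phi : seq vec.
Hypothesis root_neq0 : 0 \notin Phi.
Hypothesis refl_root : forall a b, a \in Phi -> b \in Phi -> b *m refl a \in Phi.
Hypothesis cryst : forall a b, a \in Phi -> b \in Phi ->
  exists z : int, 2 * dot b a / dot a a = z%:~R.

Lemma refl_to_positive e g : e \in Phi -> g \in Phi -> dot g e != 0 ->
  exists2 g', g' \in Phi & 0 < dot g' e /\ g' - g \in <[e]>%VS.
Proof.
move=> eP gP ge; have ee : dot e e != 0 by rewrite dot_eq0 (neq0_of_root root_neq0).
case: (ltrgtP (dot g e) 0) => [neg|pos|ge0]; last by rewrite ge0 eqxx in ge.
  exists (g *m refl e); first exact: refl_root.
  split; first by rewrite dot_reflE -mulrA mulVf // mulr1; lra.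
  by rewrite reflE addrAC subrr add0r memvN memvZ ?memv_line.
by exists g; rewrite ?subrr ?mem0v.
Qed.

Variables (a : vec) (c : R).
Hypothesis c_ge0 : 0 <= c.
Hypothesis root_le : forall b, b \in Phi -> dot a b <= c.
Notation FR := (facet_roots Phi a c).

Lemma facet_rootP f : f \in FR -> f \in Phi /\ dot a f = c.
Proof. by rewrite mem_facet_roots => /andP [fP /eqP]. Qed.

Lemma facet_roots_sub : {subset FR <= Phi}.
Proof. by move=> f /facet_rootP []. Qed.

(* With integral Cartan numbers [p, q >= 1], the root [-(s_e1 s_e2 g)] has level
   [(p + q) c - dot a g <= c], which forces [dot a g >= c]. *)
Lemma facet_level_two_positive e1 e2 g : e1 \in FR -> e2 \in FR -> dot e1 e2 = 0 ->
  g \in Phi -> 0 < dot g e1 -> 0 < dot g e2 -> dot a g = c.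
Proof.
move=> /facet_rootP [e1P e1a] /facet_rootP [e2P e2a] e12 gP ge1 ge2.
have cartan_ge1 e : e \in Phi -> 0 < dot g e -> 1 <= 2 * dot g e / dot e e.
  move=> eP ge; have [z zE] := cryst eP gP.
  have e_gt0 : 0 < dot e e by rewrite dot_gt0 // (neq0_of_root root_neq0).
  rewrite zE ler1z -gtz0_ge1 -(ltr0z R) -zE.
  by rewrite divr_gt0 ?mulr_gt0.
have := root_le (oppr_root root_neq0 refl_root (refl_root e1P (refl_root e2P gP))).
rewrite dotNr dotC !dot_reflE (dotC g) (dotC e2 e1) e12 mulr0 subr0 !(dotC _ a) e1a e2a.
have := cartan_ge1 _ e1P ge1; have := cartan_ge1 _ e2P ge2.
have := root_le gP; rewrite dotC.
set p := 2 * _ / dot e1 e1; set q := 2 * _ / dot e2 e2.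
move: (dot g a) p q => x p q xc q1 p1 ineq.
have pc : 0 <= (p - 1) * c by rewrite mulr_ge0 // subr_ge0.
have qc : 0 <= (q - 1) * c by rewrite mulr_ge0 // subr_ge0.
by apply/eqP; rewrite eq_le xc /=; lra.
Qed.

Lemma facet_span_two_nonorth e1 e2 g : e1 \in FR -> e2 \in FR -> dot e1 e2 = 0 ->
  g \in Phi -> dot g e1 != 0 -> dot g e2 != 0 -> g \in <<FR>>%VS.
Proof.
move=> e1F e2F e12 gP ge1 ge2.
have [e1P _] := facet_rootP e1F; have [e2P _] := facet_rootP e2F.
have [g1 g1P [g1e1 g1g]] := refl_to_positive e1P gP ge1.
have g1e2 : dot g1 e2 = dot g e2.
  apply/eqP; rewrite -subr_eq0 -dotBl.
  by have /vlineP [k ->] := g1g; rewrite dotZl e12 mulr0.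
have g1e2_neq0 : dot g1 e2 != 0 by rewrite g1e2.
have [g2 g2P [g2e2 g2g]] := refl_to_positive e2P g1P g1e2_neq0.
have g2e1 : dot g2 e1 = dot g1 e1.
  apply/eqP; rewrite -subr_eq0 -dotBl.
  by have /vlineP [k ->] := g2g; rewrite dotZl dotC e12 mulr0.
have g2F : g2 \in FR.
  rewrite mem_facet_roots g2P; apply/eqP/(facet_level_two_positive e1F e2F) => //.
  by rewrite g2e1.
have inFR e : e \in FR -> (<[e]> <= <<FR>>)%VS by move=> eF; rewrite -memvE memv_span.
have gg1 : g - g1 \in <<FR>>%VS by rewrite -opprB memvN (subvP (inFR _ e1F)).
have g1g2 : g1 - g2 \in <<FR>>%VS by rewrite -opprB memvN (subvP (inFR _ e2F)).
by rewrite -[g](subrK g1) memvD // -[g1](subrK g2) memvD // memv_span.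
Qed.

End FacetRoots.

Section MixedRoot.
Variables (R : realType) (n : nat).
Notation vec := 'rV[R]_n.
Variable Phi : seq vec.
Hypothesis root_neq0 : 0 \notin Phi.
Hypothesis refl_root : forall a b, a \in Phi -> b \in Phi -> b *m refl a \in Phi.
Hypothesis irr : irreducible Phi.
Variables (S : seq vec) (u : vec).
Hypothesis S_roots : {subset S <= Phi}.
Hypothesis S_perp : is_perp <<S>> u.

Definition touches (Q : pred vec) (x : vec) : Prop :=
  exists2 f, f \in S & Q f && (dot x f != 0).

Lemma not_touches Q y f : ~ touches Q y -> f \in S -> Q f -> dot y f = 0.
Proof.
move=> yQ fS Qf; apply/eqP; apply/negPn/negP => yf.
by apply: yQ; exists f; rewrite ?Qf.
Qed.

Lemma touches_refl Q x y : x \in Phi -> dot y x != 0 ->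
  touches Q x -> ~ touches Q y -> touches Q (y *m refl x).
Proof.
move=> xP yx [f fS /andP [Qf xf]] yQ.
have xx : dot x x != 0 by rewrite dot_eq0 (neq0_of_root root_neq0).
exists f; rewrite // Qf dot_reflE (not_touches yQ fS Qf) sub0r oppr_eq0.
by rewrite !mulf_neq0 ?invr_eq0 ?pnatr_eq0.
Qed.

Lemma touches_refl_orth Q x y :
  touches Q x -> ~ touches Q y -> touches Q (x *m refl y).
Proof.
move=> [f fS /andP [Qf xf]] yQ.
by exists f; rewrite // Qf dot_reflE (not_touches yQ fS Qf) mulr0 subr0.
Qed.

Lemma orth_not_touches P y : ~ touches P y -> ~ touches (predC P) y ->
  forall f, f \in S -> dot y f = 0.
Proof.
move=> yP yNP f fS; have [Pf|NPf] := boolP (P f); first exact: not_touches yP fS Pf.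
exact: not_touches yNP fS NPf.
Qed.

Lemma orth_S_colinear y : (forall f, f \in S -> dot y f = 0) ->
  y = (dot y u / dot u u) *: u.
Proof.
move=> yS; apply: perpv_sub_colinear; move/is_perpP: S_perp => <-.
by apply/span_subvP => f fS; rewrite mem_perpv dotC yS.
Qed.

Lemma touches_partition (Q : pred vec) :
  (forall f f', f \in S -> f' \in S -> Q f -> ~~ Q f' -> dot f f' = 0) ->
  (exists2 f, f \in S & Q f) -> (exists2 f', f' \in S & ~~ Q f') ->
  exists x y, [/\ x \in Phi, y \in Phi, touches Q x, ~ touches Q y & dot x y != 0].
Proof.
move=> orthQ [f fS Qf] [f' f'S nQf'].
pose T x := boolp.asbool (touches Q x).
have Tf : exists2 x, x \in Phi & T x.
  exists f; rewrite ?S_roots //; apply/boolp.asboolP; exists f; rewrite // Qf /=.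
  by rewrite dot_eq0 (neq0_of_root root_neq0) ?S_roots.
have nTf' : exists2 y, y \in Phi & ~~ T y.
  exists f'; rewrite ?S_roots //; apply/boolp.asboolPn => -[g gS /andP [Qg]].
  by rewrite dotC (orthQ g f') ?eqxx.
have [x [y [xP yP /boolp.asboolP xQ /boolp.asboolPn yQ xy]]] := irr Tf nTf'.
by exists x, y.
Qed.

(* If no root touches both sides, a root touching only one side is orthogonal to every
   root touching only the other (else a reflection would touch both).  Irreducibility
   then yields roots [y1], [y2] touching neither side, hence multiples of [u], linked to
   roots [x1] touching [P] and [x2] touching [predC P]; the reflection of [y1] in [x1]
   touches [P] but is not orthogonal to [x2]. *)
Lemma exists_touches_both (P : pred vec) :
  (forall f f', f \in S -> f' \in S -> P f -> ~~ P f' -> dot f f' = 0) ->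
  (exists2 f, f \in S & P f) -> (exists2 f', f' \in S & ~~ P f') ->
  exists2 g, g \in Phi & touches P g /\ touches (predC P) g.
Proof.
move=> orthP SP SNP; apply: NNPP => no_both.
have one_side x : x \in Phi -> touches P x -> touches (predC P) x -> False.
  by move=> xP xT xNT; apply: no_both; exists x.
have orth x y : x \in Phi -> y \in Phi -> touches P x -> touches (predC P) y ->
    dot x y = 0.
  move=> xP yP xT yNT; apply/eqP; apply/negPn/negP => xy.
  apply: (one_side (x *m refl y)); first exact: refl_root.
    by apply: touches_refl_orth xT (one_side y yP ^~ yNT).
  exact: touches_refl yP xy yNT (one_side x xP xT).
have orthNP f f' : f \in S -> f' \in S -> ~~ P f -> ~~ ~~ P f' -> dot f f' = 0.
  by move=> fS f'S NPf /negPn Pf'; rewrite dotC orthP.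
have [x1 [y1 [x1P y1P x1T y1T xy1]]] := touches_partition orthP SP SNP.
have y1NT : ~ touches (predC P) y1 by move/(orth x1 y1 x1P y1P x1T)/eqP; apply/negP.
have [f1 f1S Pf1] := SP; have [f2 f2S NPf2] := SNP.
have SNNP : exists2 f, f \in S & ~~ predC P f by exists f1; rewrite //= negbK.
have [x2 [y2 [x2P y2P x2NT y2NT xy2]]] := touches_partition orthNP SNP SNNP.
have y2T : ~ touches P y2 by move=> y2T; move: xy2; rewrite dotC orth ?eqxx.
have y1E := orth_S_colinear (orth_not_touches y1T y1NT).
have y2E := orth_S_colinear (orth_not_touches y2T y2NT).
have x2y1 : dot x2 y1 != 0.
  have y1_neq0 : y1 != 0 by apply: (neq0_of_root root_neq0).
  move: xy2 y1_neq0; rewrite y2E {2}y1E !dotZr !mulf_eq0 !negb_or.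
  case/andP => /andP [_ ->] -> y1_neq0; rewrite !andbT.
  by apply: contraNneq y1_neq0 => y1u; rewrite y1E y1u mul0r scale0r.
have zT : touches P (y1 *m refl x1) by apply: touches_refl; rewrite // dotC.
move: x2y1; have := orth _ _ (refl_root x1P y1P) x2P zT x2NT.
by rewrite dot_reflE (orth x1 x2) // mulr0 subr0 dotC => ->; rewrite eqxx.
Qed.

End MixedRoot.

Section ParabolicOfFacet.
Variables (R : realType) (n : nat).
Notation vec := 'rV[R]_n.
Variable Phi : seq vec.
Variables (Pi omega : 'I_n -> vec).
Hypothesis root_neq0 : 0 \notin Phi.
Hypothesis refl_root : forall a b, a \in Phi -> b \in Phi -> b *m refl a \in Phi.
Hypothesis cryst : forall a b, a \in Phi -> b \in Phi ->
  exists z : int, 2 * dot b a / dot a a = z%:~R.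
Hypothesis irr : irreducible Phi.
Hypothesis base : is_base Phi Pi.
Hypothesis coweights : is_coweights Pi omega.
Variables (a : vec) (c : R) (h : 'I_n).
Hypothesis c_ge0 : 0 <= c.
Hypothesis root_le : forall b, b \in Phi -> dot a b <= c.
Hypothesis facet_perp : is_perp <<facet_roots Phi a c>> (omega h).
Notation S := (facet_roots Phi a c).

Lemma mem_parabolic_facet x : (x \in parabolic Phi Pi h) = (x \in Phi) && (x \in <<S>>%VS).
Proof. by rewrite (mem_parabolic base coweights) facet_perp. Qed.

Lemma parabolic_touches_facet x : x \in parabolic Phi Pi h ->
  exists2 f, f \in S & dot x f != 0.
Proof.
rewrite mem_parabolic_facet => /andP [xP xS]; apply: NNPP => x_orth.
suff x0 : x = 0 by move: root_neq0; rewrite -x0 xP.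
apply: (orth_span_eq0 xS) => f fS; apply/eqP; apply/negPn/negP => fx.
by apply: x_orth; exists f; rewrite // dotC.
Qed.

Lemma parabolic_irreducible : irreducible (parabolic Phi Pi h).
Proof.
have S_par f : f \in S -> f \in parabolic Phi Pi h.
  by move=> fS; rewrite mem_parabolic_facet memv_span ?(facet_roots_sub fS).
move=> P [p pPar Pp] [q qPar NPq]; apply: NNPP => no_link.
have orth x y : x \in parabolic Phi Pi h -> y \in parabolic Phi Pi h ->
    P x -> ~~ P y -> dot x y = 0.
  move=> xPar yPar Px NPy; apply/eqP; apply/negPn/negP => xy.
  by apply: no_link; exists x, y.
have SP : exists2 f, f \in S & P f.
  have [f fS pf] := parabolic_touches_facet pPar; exists f => //.
  by apply: contraTT pf => NPf; rewrite negbK (orth p f) // S_par.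
have SNP : exists2 f, f \in S & ~~ P f.
  have [f fS qf] := parabolic_touches_facet qPar; exists f => //.
  by apply: contraTN qf => Pf; rewrite negbK dotC (orth f q) // S_par.
have orthS f f' : f \in S -> f' \in S -> P f -> ~~ P f' -> dot f f' = 0.
  by move=> fS f'S; apply: orth; apply: S_par.
have [g gP [[e1 e1S /andP [Pe1 ge1]] [e2 e2S /andP [NPe2 ge2]]]] :=
  exists_touches_both root_neq0 refl_root irr (@facet_roots_sub _ _ Phi a c) facet_perp
    orthS SP SNP.
have gPar : g \in parabolic Phi Pi h.
  rewrite mem_parabolic_facet gP.
  apply: (facet_span_two_nonorth root_neq0 refl_root cryst c_ge0 root_le e1S e2S) => //.
  exact: orthS.
have [e1Par e2Par] := (S_par _ e1S, S_par _ e2S).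
have [Pg|NPg] := boolP (P g); first by rewrite (orth g e2) ?eqxx in ge2.
by rewrite dotC (orth e1 g) ?eqxx in ge1.
Qed.

End ParabolicOfFacet.

Section Hyperplanes.
Variables (R : realType) (n : nat).
Notation vec := 'rV[R]_n.
Variable Phi : seq vec.
Variables (Pi omega : 'I_n -> vec).
Hypothesis n_ge2 : (2 <= n)%N.
Hypothesis root_neq0 : 0 \notin Phi.
Hypothesis span_roots : forall v : vec, v \in <<Phi>>%VS.
Hypothesis refl_root : forall a b, a \in Phi -> b \in Phi -> b *m refl a \in Phi.
Hypothesis base : is_base Phi Pi.
Hypothesis coweights : is_coweights Pi omega.

Lemma in_HPhi_coweight V : in_HPhi Phi V -> exists w k,
  [/\ in_weyl Phi w, in_HPhi Phi (perpv (omega k)) & is_perp V (omega k *m w)].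
Proof.
move=> HV; have [_ [_ [_ _ _ dimV]]] := in_HPhiP n_ge2 root_neq0 span_roots refl_root HV.
have [u u_neq0 Vu] := perpv_exists (ltnW n_ge2) dimV.
have [w wW dom] := dominant_weyl root_neq0 span_roots refl_root base coweights u.
have [w' [w'W wK w'K]] := weyl_inv root_neq0 wW.
have HVw := in_HPhi_weyl root_neq0 refl_root wW w'W wK w'K HV.
have /is_perpP Vw_perp := perp_weyl root_neq0 wW wK w'K (proj2 (is_perpP V u) Vu).
have [a [c [_ _ VwE _]]] := in_HPhiP n_ge2 root_neq0 span_roots refl_root HVw.
have uw_neq0 : u *m w != 0 by rewrite -dot_eq0 (dot_weyl root_neq0 _ _ wW) dot_eq0.
have [k kE] := perpv_dominant_coweight span_roots base coweights
  (@facet_roots_sub _ _ Phi a c) uw_neq0 dom (etrans (esym VwE) Vw_perp).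
exists w', k; split => //; first by rewrite -kE -Vw_perp.
have Vwk : is_perp (img w V) (omega k) by apply/is_perpP; rewrite Vw_perp kE.
by rewrite -(imgK V wK w'K); exact: (perp_weyl root_neq0 w'W w'K wK Vwk).
Qed.

Lemma in_HPhi_of_coweight V w k : in_weyl Phi w -> in_HPhi Phi (perpv (omega k)) ->
  is_perp V (omega k *m w) -> in_HPhi Phi V.
Proof.
move=> wW Hk /is_perpP ->; have [w' [w'W wK w'K]] := weyl_inv root_neq0 wW.
have /is_perpP <- := perp_weyl root_neq0 wW wK w'K (perpvP (omega k)).
exact (in_HPhi_weyl root_neq0 refl_root wW w'W wK w'K Hk).
Qed.

End Hyperplanes.

Definition facet_coweights (R : realType) (n : nat) (Phi : seq 'rV[R]_n)
    (omega : 'I_n -> 'rV[R]_n) : {set 'I_n} :=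
  [set k | boolp.asbool (in_HPhi Phi (perpv (omega k)))].

Theorem proposition3p2 (R : realType) (n : nat) (Phi : seq 'rV[R]_n)
    (Pi omega : 'I_n -> 'rV[R]_n) :
  (2 <= n)%N ->
  is_root_system Phi -> irreducible Phi -> is_base Phi Pi ->
  is_coweights Pi omega ->
  exists H : {set 'I_n},
    (forall V : {vspace 'rV[R]_n},
        in_HPhi Phi V <->
        exists (w : 'M[R]_n) (k : 'I_n),
          [/\ in_weyl Phi w, k \in H & is_perp V (omega k *m w)]) /\
    (forall h, h \in H -> irreducible (parabolic Phi Pi h)).
Proof.
move=> n_ge2 [root_neq0 span_roots _ refl_root cryst] irr base coweights.
exists (facet_coweights Phi omega); split=> [V|h].
  split=> [HV|[w [k [wW + Vperp]]]].
    have [w [k [wW Hk Vperp]]] :=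
      in_HPhi_coweight n_ge2 root_neq0 span_roots refl_root base coweights HV.
    by exists w, k; rewrite inE; split => //; apply/boolp.asboolP.
  by rewrite inE => /boolp.asboolP Hk; apply: in_HPhi_of_coweight Vperp.
rewrite inE => /boolp.asboolP Hh.
have [a [c [c_gt0 root_le VE _]]] := in_HPhiP n_ge2 root_neq0 span_roots refl_root Hh.
apply: (parabolic_irreducible root_neq0 refl_root cryst irr base coweights (ltW c_gt0)
  root_le).
by rewrite -VE; apply/is_perpP.
Qed.
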